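(* For any torsionfree compact Hausdorff linear-topological $o$-module $M$, the locally convex $K$-vector space $M_K$ is complete.
   Context: $K$ is a finite extension of $\mathbb{Q}_p$ with ring of integers $o$. A topological $o$-module is linear-topological if $0$ has a fundamental system of open neighbourhoods consisting of $o$-submodules. For a torsionfree $o$-module $M$, $M_K := M\otimes_o K$ contains $M$, and $M_K$ is equipped with the finest locally convex topology such that the inclusion $M\subseteq M_K$ is continuous (equivalently, an $o$-submodule $L\subseteq M_K$ is open iff $\alpha L\cap M$ is open in $M$ for every $0\neq\alpha\in o$). *)

From HB Require Import structures.
From mathcomp Require Import all_boot all_order all_algebra.
From mathcomp Require Import classical_sets reals.

Set Implicit Arguments.
Unset Strict Implicit.
Unset Printing Implicit Defensive.

Import Order.TTheory GRing.Theory Num.Theory.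
Local Open Scope ring_scope.
Local Open Scope classical_set_scope.

Definition nonarch_abs (R : realType) (K : fieldType) (abs : K -> R) : Prop :=
  [/\ forall x, 0 <= abs x,
      forall x, abs x = 0 <-> x = 0,
      forall x y, abs (x * y) = abs x * abs y &
      forall x y, abs (x + y) <= Num.max (abs x) (abs y)].

Definition abs_cauchy_seq (R : realType) (K : fieldType) (abs : K -> R)
  (u : nat -> K) : Prop :=
  forall e : R, 0 < e -> exists N : nat,
    forall n m, (N <= n)%N -> (N <= m)%N -> abs (u n - u m) < e.

Definition abs_cvg (R : realType) (K : fieldType) (abs : K -> R)
  (u : nat -> K) (l : K) : Prop :=
  forall e : R, 0 < e -> exists N : nat,
    forall n, (N <= n)%N -> abs (u n - l) < e.

Definition abs_complete (R : realType) (K : fieldType) (abs : K -> R) : Prop :=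
  forall u : nat -> K, abs_cauchy_seq abs u -> exists l, abs_cvg abs u l.

(* the ring of integers o = closed unit ball is (sequentially) compact,
   i.e. K is locally compact *)
Definition integers_compact (R : realType) (K : fieldType) (abs : K -> R) : Prop :=
  forall u : nat -> K, (forall n, abs (u n) <= 1) ->
    exists (phi : nat -> nat) (l : K),
      (forall n, (phi n < phi n.+1)%N) /\ abs_cvg abs (u \o phi) l.

Definition padic_field (R : realType) (K : fieldType) (abs : K -> R) (p : nat)
  : Prop :=
  [/\ nonarch_abs abs,
      forall n : nat, (n.+1)%:R != 0 :> K,
      abs p%:R < 1,
      abs_complete abs &
      integers_compact abs].

Definition o_submodule (R : realType) (K : fieldType) (abs : K -> R)
  (V : lmodType K) (L : set V) : Prop :=
  [/\ L 0,
      forall x y, L x -> L y -> L (x + y) &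
      forall (a : K) x, abs a <= 1 -> L x -> L (a *: x)].

(* V = M (x)_o K: every vector is in alpha^-1 M for some 0 <> alpha in o *)
Definition generates_over_K (R : realType) (K : fieldType) (abs : K -> R)
  (V : lmodType K) (M : set V) : Prop :=
  forall v : V, exists a : K, [/\ a != 0, abs a <= 1 & M (a *: v)].

Definition topology_on (T : Type) (M : set T) (tau : set (set T)) : Prop :=
  [/\ forall U, tau U -> U `<=` M,
      tau M,
      forall F : set (set T), F `<=` tau -> tau (\bigcup_(U in F) U) &
      forall U W, tau U -> tau W -> tau (U `&` W)].

Definition hausdorff_on (T : Type) (M : set T) (tau : set (set T)) : Prop :=
  forall x y, M x -> M y -> x <> y ->
    exists U W, [/\ tau U, tau W, U x, W y & U `&` W = set0].

Definition compact_on (T : Type) (M : set T) (tau : set (set T)) : Prop :=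
  forall F : set (set T), F `<=` tau -> M `<=` \bigcup_(U in F) U ->
    exists (n : nat) (G : nat -> set T),
      (forall i, (i < n)%N -> F (G i)) /\
      (forall x, M x -> exists i, (i < n)%N /\ G i x).

Definition topological_o_module (R : realType) (K : fieldType) (abs : K -> R)
  (V : lmodType K) (M : set V) (tau : set (set V)) : Prop :=
  (forall x y, M x -> M y -> forall W, tau W -> W (x + y) ->
     exists U U', [/\ tau U, tau U', U x, U' y &
                     forall u u', U u -> U' u' -> W (u + u')]) /\
  (forall (a : K) x, abs a <= 1 -> M x -> forall W, tau W -> W (a *: x) ->
     exists (d : R) U, [/\ 0 < d, tau U, U x &
        forall (b : K) y, abs b <= 1 -> abs (b - a) < d -> U y -> W (b *: y)]).

Definition linear_topological (R : realType) (K : fieldType) (abs : K -> R)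
  (V : lmodType K) (M : set V) (tau : set (set V)) : Prop :=
  forall W, tau W -> W 0 ->
    exists L, [/\ o_submodule abs L, tau L & L `<=` W].

Definition MK_open (R : realType) (K : fieldType) (abs : K -> R)
  (V : lmodType K) (M : set V) (tau : set (set V)) (U : set V) : Prop :=
  forall v, U v -> exists L : set V,
    [/\ o_submodule abs L,
        forall a : K, a != 0 -> abs a <= 1 -> tau (((fun x => a *: x) @` L) `&` M) &
        forall w, L w -> U (v + w)].

Definition proper_filter_on (T : Type) (F : set (set T)) : Prop :=
  [/\ F setT, ~ F set0,
      forall A B, F A -> A `<=` B -> F B &
      forall A B, F A -> F B -> F (A `&` B)].

Definition MK_cauchy (R : realType) (K : fieldType) (abs : K -> R)
  (V : lmodType K) (M : set V) (tau : set (set V)) (F : set (set V)) : Prop :=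
  forall U, MK_open abs M tau U -> U 0 ->
    exists A, F A /\ forall x y, A x -> A y -> U (x - y).

Definition MK_converges (R : realType) (K : fieldType) (abs : K -> R)
  (V : lmodType K) (M : set V) (tau : set (set V)) (F : set (set V)) : Prop :=
  exists v : V, forall U, MK_open abs M tau U -> U v -> F U.

Definition MK_complete (R : realType) (K : fieldType) (abs : K -> R)
  (V : lmodType K) (M : set V) (tau : set (set V)) : Prop :=
  forall F, proper_filter_on F -> MK_cauchy abs M tau F ->
    MK_converges abs M tau F.

From HB Require Import structures.
From mathcomp Require Import all_boot all_order all_algebra.
From mathcomp Require Import classical_sets reals.
From mathcomp Require Import boolp lra.

(* Put pi = p, so that M_K is the increasing union of the lattices pi^-i M.
   A Cauchy filter F on M_K is bounded: some pi^-n M meets A + U for every A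
   in F and every open lattice U.  Otherwise pick A_i in F and open lattices
   U_i with A_i + U_i disjoint from pi^-i M, and let W be the open lattice of
   finite sums of elements of U_0 /\ ... /\ U_i /\ pi^-i M.  If A in F is
   W-small and x in A lies in pi^-m M, then for y in A /\ A_m the difference
   y - x splits as h + t with h in pi^-m M and t in U_m, so y - t lies in
   (A_m + U_m) /\ pi^-m M.  Boundedness makes the sets M /\ pi^n (A + U),
   closed in the compact space M, a downward directed family of nonempty
   sets; a common point w gives the cluster point pi^-n w of F, which is a
   limit since F is Cauchy. *)

Set Implicit Arguments.
Unset Strict Implicit.
Unset Printing Implicit Defensive.
Import Order.TTheory GRing.Theory Num.Theory.
Local Open Scope ring_scope.

Lemma bernoulli_ler (R : realDomainType) (h : R) (k : nat) :
  0 <= h -> 1 + k%:R * h <= (1 + h) ^+ k.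
Proof.
move=> h_ge0; elim: k => [|k IH]; first by rewrite mul0r addr0 expr0.
rewrite exprS -natr1 mulrDl mul1r.
have : (1 + h) * (1 + k%:R * h) <= (1 + h) * (1 + h) ^+ k.
  by rewrite ler_wpM2l // addr_ge0.
have : 0 <= k%:R * h * h by rewrite !mulr_ge0.
nra.
Qed.

Lemma exists_expr_le (R : archiRealFieldType) (q r : R) :
  0 <= q -> q < 1 -> 0 < r -> exists k, q ^+ k <= r.
Proof.
move=> q_ge0 q_lt1 r_gt0.
have [->|q_neq0] := eqVneq q 0; first by exists 1%N; rewrite expr1 ltW.
have q_gt0 : 0 < q by rewrite lt0r q_neq0.
have h_gt0 : 0 < q^-1 - 1 by rewrite subr_gt0 invf_gt1.
set k := Num.bound (r^-1 / (q^-1 - 1)).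
have : r^-1 < k%:R * (q^-1 - 1).
  by rewrite -ltr_pdivrMr // archi_boundP // ltW // divr_gt0 // invr_gt0.
have := bernoulli_ler k (ltW h_gt0); rewrite (addrC 1 (q^-1 - 1)) subrK => q_bernoulli r_lt.
exists k; rewrite -[q]invrK exprVn -[r]invrK lef_pV2 ?posrE ?exprn_gt0 ?invr_gt0 //.
by apply: ltW; apply: lt_le_trans q_bernoulli; lra.
Qed.

Local Open Scope classical_set_scope.

Section NonarchimedeanAbs.
Variables (R : realType) (K : fieldType) (abs : K -> R).
Hypothesis habs : nonarch_abs abs.

Lemma nonarch_abs1 : abs 1 = 1.
Proof.
have [_ abs_eq0 absM _] := habs.
have abs1_neq0 : abs 1 != 0 by apply/eqP => /abs_eq0 /eqP; rewrite oner_eq0.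
by apply: (mulfI abs1_neq0); rewrite mulr1 -absM mul1r.
Qed.

Lemma nonarch_absN1 : abs (-1) = 1.
Proof.
have [abs_ge0 _ absM _] := habs.
have := absM (-1) (-1); rewrite mulrNN mul1r nonarch_abs1.
by have := abs_ge0 (-1); nra.
Qed.

Lemma nonarch_absX a n : abs (a ^+ n) = abs a ^+ n.
Proof.
have [_ _ absM _] := habs.
by elim: n => [|n IH]; rewrite ?expr0 ?nonarch_abs1 // !exprS absM IH.
Qed.

Lemma nonarch_abs_gt0 a : a != 0 -> 0 < abs a.
Proof.
have [abs_ge0 abs_eq0 _ _] := habs.
by move=> a_neq0; rewrite lt0r abs_ge0 andbT; apply: contra a_neq0 => /eqP/abs_eq0->.
Qed.

Lemma nonarch_absV a : a != 0 -> abs a^-1 = (abs a)^-1.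
Proof.
have [_ _ absM _] := habs.
move=> a_neq0; have absa_neq0 := lt0r_neq0 (nonarch_abs_gt0 a_neq0).
by apply: (mulfI absa_neq0); rewrite -absM !mulfV // nonarch_abs1.
Qed.

End NonarchimedeanAbs.

Section OSubmodules.
Variables (R : realType) (K : fieldType) (abs : K -> R) (V : lmodType K).
Hypothesis habs : nonarch_abs abs.
Implicit Types S : set V.

Lemma o_submoduleN S x : o_submodule abs S -> S x -> S (- x).
Proof.
by move=> [_ _ SZ] Sx; rewrite -scaleN1r; apply: SZ; rewrite ?(nonarch_absN1 habs).
Qed.

Lemma o_submoduleB S x y : o_submodule abs S -> S x -> S y -> S (x - y).
Proof. by move=> oS Sx Sy; case: (oS) => _ SD _; apply: SD (o_submoduleN oS Sy). Qed.

Lemma o_submodule_sum S (I : Type) (r : seq I) (P : pred I) (F : I -> V) :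
  o_submodule abs S -> (forall i, P i -> S (F i)) -> S (\sum_(i <- r | P i) F i).
Proof. by move=> [S0 SD _] SF; apply: big_ind. Qed.

Lemma o_submoduleI S1 S2 :
  o_submodule abs S1 -> o_submodule abs S2 -> o_submodule abs (S1 `&` S2).
Proof.
move=> [S0 SD SZ] [T0 TD TZ]; split => //.
- by move=> x y [? ?] [? ?]; split; [apply: SD | apply: TD].
- by move=> a x a_le1 [? ?]; split; [apply: SZ | apply: TZ].
Qed.

Lemma o_submodule_scale S (a : K) :
  o_submodule abs S -> o_submodule abs ((fun x => a *: x) @` S).
Proof.
move=> [S0 SD SZ]; split.
- by exists 0; rewrite ?scaler0.
- by move=> _ _ [x Sx <-] [y Sy <-]; exists (x + y); rewrite ?scalerDr //; apply: SD.
- move=> b _ b_le1 [x Sx <-]; exists (b *: x); first exact: SZ.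
  by rewrite !scalerA mulrC.
Qed.

End OSubmodules.

Lemma open_of_nbhs (T : Type) (M : set T) (tau : set (set T)) (S : set T) :
  topology_on M tau ->
  (forall y, S y -> exists O, [/\ tau O, O y & O `<=` S]) -> tau S.
Proof.
move=> [_ _ tau_bigcup _] S_nbhs.
have -> : S = \bigcup_(O in [set O | tau O /\ O `<=` S]) O.
  apply/seteqP; split => [y /S_nbhs [O [tO Oy OS]] | y [O [_ OS] /OS]] //.
  by exists O.
by apply: tau_bigcup => O [].
Qed.

Lemma compact_directed_meet (T : Type) (M : set T) (tau : set (set T))
    (C : set (set T)) :
  compact_on M tau ->
  (forall Z, C Z -> tau (M `\` Z)) ->
  (forall Z1 Z2, C Z1 -> C Z2 -> exists2 Z, C Z & Z `<=` Z1 `&` Z2) ->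
  (forall Z, C Z -> exists z, M z /\ Z z) ->
  (exists Z, C Z) ->
  exists w, M w /\ forall Z, C Z -> Z w.
Proof.
move=> M_compact C_closed C_directed C_nonempty [Z0 CZ0].
apply: contrapT => no_meet.
pose cover := [set O | exists2 Z, C Z & O = M `\` Z].
have cover_open : cover `<=` tau by move=> _ [Z CZ ->]; exact: C_closed.
have covers : M `<=` \bigcup_(O in cover) O.
  move=> z Mz; apply: contrapT => z_uncovered; apply: no_meet.
  exists z; split => // Z CZ; apply: contrapT => Zz_false.
  by apply: z_uncovered; exists (M `\` Z) => //; exists Z.
have [n [G [G_cover G_covers]]] := M_compact cover cover_open covers.
have below k : (k <= n)%N ->
    exists2 Z, C Z & forall i, (i < k)%N -> forall z, Z z -> ~ G i z.
  elim: k => [|k IH] k_le_n; first by exists Z0.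
  have [Z CZ Z_below] := IH (ltnW k_le_n).
  have [Zk CZk G_k] := G_cover k k_le_n.
  have [Z' CZ' Z'_sub] := C_directed _ _ CZ CZk.
  exists Z' => // i; rewrite ltnS leq_eqVlt => /orP[/eqP -> | i_lt_k] z /Z'_sub.
  - by move=> [_ Zkz]; rewrite G_k => -[].
  - by move=> [Zz _]; apply: Z_below.
have [Z CZ Z_below] := below n (leqnn n).
have [z [Mz Zz]] := C_nonempty Z CZ.
have [i [i_lt_n Giz]] := G_covers z Mz.
exact: Z_below i_lt_n z Zz Giz.
Qed.

Lemma proper_filter_nonempty (T : Type) (F : set (set T)) A :
  proper_filter_on F -> F A -> exists x, A x.
Proof. by move=> [_ F_neq0 _ _] FA; apply/set0P/eqP => A0; apply: F_neq0; rewrite -A0. Qed.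

Section Lattices.
Variables (R : realType) (K : fieldType) (abs : K -> R) (V : lmodType K).
Variables (M : set V) (tau : set (set V)).
Hypotheses (habs : nonarch_abs abs) (hM : o_submodule abs M).
Hypotheses (htop : topology_on M tau) (htm : topological_o_module abs M tau).

Definition MK_lattice (L : set V) : Prop :=
  o_submodule abs L /\
  forall a : K, a != 0 -> abs a <= 1 -> tau ((fun x => a *: x) @` L `&` M).

Lemma MK_lattice_open L : MK_lattice L -> MK_open abs M tau L.
Proof.
move=> [oL tL] v Lv; exists L; split => // w Lw.
by case: oL => _ LD _; apply: LD.
Qed.

Lemma MK_latticeT : MK_lattice setT.
Proof.
have [_ tauM _ _] := htop.
split=> [|a a_neq0 _]; first by split.
rewrite (_ : _ `&` M = M) //; apply/seteqP; split => [x [] // | x Mx].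
by split => //; exists (a^-1 *: x); rewrite // scalerA mulfV // scale1r.
Qed.

Lemma MK_latticeI L1 L2 :
  MK_lattice L1 -> MK_lattice L2 -> MK_lattice (L1 `&` L2).
Proof.
have [_ _ _ tauI] := htop.
move=> [oL1 tL1] [oL2 tL2]; split=> [|a a_neq0 a_le1]; first exact: o_submoduleI.
rewrite (_ : _ `&` M = ((fun x => a *: x) @` L1 `&` M) `&` ((fun x => a *: x) @` L2 `&` M)).
  by apply: tauI; [apply: tL1 | apply: tL2].
apply/seteqP; split => [_ [[x [L1x L2x] <-] Mx] | _ [[[x L1x <-] Mx] [[y L2y exy] _]]].
  by split; split => //; exists x.
by split => //; exists x => //; split => //; rewrite -(scalerI a_neq0 exy).
Qed.

Lemma MK_lattice_prefix (U : nat -> set V) n :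
  (forall i, MK_lattice (U i)) ->
  MK_lattice [set x | forall i, (i <= n)%N -> U i x].
Proof.
move=> U_lattice; elim: n => [|n IH].
  rewrite (_ : [set x | _] = U 0%N) //; apply/seteqP.
  by split => [x /(_ 0%N) | x U0x [|i]] //; apply.
rewrite (_ : [set x | _] = [set x | forall i, (i <= n)%N -> U i x] `&` U n.+1).
  exact: MK_latticeI.
apply/seteqP; split => x.
  by move=> Ux; split => [i /leqW|]; apply: Ux.
by move=> [Ux Unx] i; rewrite leq_eqVlt ltnS => /orP[/eqP -> | /Ux].
Qed.

(* Continuity of addition at (y, -y) carries the neighbourhood O of 0 to one
   of y. *)
Lemma open_o_submodule S O : o_submodule abs S -> S `<=` M ->
  tau O -> O 0 -> O `<=` S -> tau S.
Proof.
have [addC _] := htm.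
move=> oS SM tO O0 OS; apply: (open_of_nbhs htop) => y Sy.
have My := SM _ Sy.
have := addC y (- y) My (o_submoduleN habs hM My) O tO.
rewrite subrr => /(_ O0) [U [U' [tU tU' Uy U'y UU'O]]].
exists U; split => // u Uu.
by rewrite -(subrK y u); case: oS => _ SD _; apply: SD => //; apply/OS/UU'O.
Qed.

Lemma cauchy_cluster_converges F v : proper_filter_on F -> MK_cauchy abs M tau F ->
  (forall A U, F A -> MK_lattice U -> exists a u, [/\ A a, U u & v = a + u]) ->
  MK_converges abs M tau F.
Proof.
move=> [_ _ F_up _] F_cauchy v_cluster; exists v => O O_open Ov.
have [L [oL tL vLO]] := O_open v Ov.
have L_lattice : MK_lattice L by split.
have [L0 _ _] := oL.
have [A [FA AL]] := F_cauchy L (MK_lattice_open L_lattice) L0.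
have [a [l [Aa Ll v_al]]] := v_cluster A L FA L_lattice; rewrite {}v_al in vLO.
apply: (F_up A) => // x Ax.
have -> : x = a + l + (x - a - l).
  by rewrite -(addrA x) -opprD [RHS]addrC subrK.
by apply/vLO/(o_submoduleB habs oL (AL x a Ax Aa) Ll).
Qed.

End Lattices.

Section Boundedness.
Variables (R : realType) (K : fieldType) (abs : K -> R) (V : lmodType K).
Variables (M : set V) (tau : set (set V)) (pi : K).
Hypotheses (habs : nonarch_abs abs) (hM : o_submodule abs M).
Hypotheses (htop : topology_on M tau) (htm : topological_o_module abs M tau).
Hypotheses (hgen : generates_over_K abs M) (hcomp : compact_on M tau).
Hypotheses (pi_neq0 : pi != 0) (abs_pi_lt1 : abs pi < 1).

Let MK_lattice := MK_lattice abs M tau.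

Lemma abs_piX_le1 k : abs (pi ^+ k) <= 1.
Proof.
have [abs_ge0 _ _ _] := habs.
by rewrite (nonarch_absX habs) exprn_ile1 // ltW.
Qed.

Lemma exists_abs_piX_div_le1 a : a != 0 -> exists k, abs (pi ^+ k / a) <= 1.
Proof.
have [abs_ge0 _ absM _] := habs.
move=> a_neq0; have abs_a_gt0 := nonarch_abs_gt0 habs a_neq0.
have [k pik_le] := exists_expr_le (abs_ge0 pi) abs_pi_lt1 abs_a_gt0.
by exists k; rewrite absM (nonarch_absV habs) // (nonarch_absX habs) ler_pdivrMr // mul1r.
Qed.

(* [dilate i] is the lattice pi^-i M. *)
Definition dilate (i : nat) : set V := [set x | M (pi ^+ i *: x)].

Lemma dilate_o_submodule i : o_submodule abs (dilate i).
Proof.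
have [M0 MD MZ] := hM; split; rewrite /dilate /=.
- by rewrite scaler0.
- by move=> x y Mx My; rewrite scalerDr; apply: MD.
- by move=> a x a_le1 Mx; rewrite scalerA mulrC -scalerA; apply: MZ.
Qed.

Lemma dilate_mono i j : (i <= j)%N -> dilate i `<=` dilate j.
Proof.
have [_ _ MZ] := hM.
move=> i_le_j x Mx; have := MZ _ _ (abs_piX_le1 (j - i)) Mx.
by rewrite scalerA -exprD subnK.
Qed.

Lemma dilate_exhaust x : exists m, dilate m x.
Proof.
have [_ _ MZ] := hM.
have [a [a_neq0 _ Max]] := hgen x.
have [k hk] := exists_abs_piX_div_le1 a_neq0.
by exists k; have := MZ _ _ hk Max; rewrite scalerA mulfVK.
Qed.

Definition graded_sum (U : nat -> set V) : set V :=
  [set x | exists N (w : nat -> V),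
     (forall i, U i (w i) /\ dilate i (w i)) /\ x = \sum_(i < N) w i].

Lemma graded_sum_o_submodule U :
  (forall i, o_submodule abs (U i)) -> o_submodule abs (graded_sum U).
Proof.
move=> U_osub.
have piece0 i : U i 0 /\ dilate i 0.
  by split; [case: (U_osub i) | case: (dilate_o_submodule i)].
split.
- by exists 0%N, (fun=> 0); rewrite big_ord0.
- move=> _ _ [N1 [w1 [w1_piece ->]]] [N2 [w2 [w2_piece ->]]].
  pose cut N (w : nat -> V) i := if (i < N)%N then w i else 0.
  have cut_piece N w : (forall i, U i (w i) /\ dilate i (w i)) ->
      forall i, U i (cut N w i) /\ dilate i (cut N w i).
    by move=> w_piece i; rewrite /cut; case: ifP.
  exists (maxn N1 N2), (fun i => cut N1 w1 i + cut N2 w2 i); split.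
    move=> i; have [U1 D1] := cut_piece N1 w1 w1_piece i.
    have [U2 D2] := cut_piece N2 w2 w2_piece i.
    have [_ UD _] := U_osub i; have [_ DD _] := dilate_o_submodule i.
    by split; [apply: UD | apply: DD].
  rewrite big_split /= (big_ord_widen _ w1 (leq_maxl N1 N2)).
  by rewrite (big_ord_widen _ w2 (leq_maxr N1 N2)) [in LHS]big_mkcond [X in _ + X]big_mkcond.
- move=> a _ a_le1 [N [w [w_piece ->]]]; exists N, (fun i => a *: w i).
  split; last by rewrite scaler_sumr.
  move=> i; have [Uw Dw] := w_piece i.
  have [_ _ UZ] := U_osub i; have [_ _ DZ] := dilate_o_submodule i.
  by split; [apply: UZ | apply: DZ].
Qed.

Lemma graded_sum_single (U : nat -> set V) k v :
  (forall i, U i 0) -> U k v -> dilate k v -> graded_sum U v.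
Proof.
move=> U0 Ukv Dkv; exists k.+1, (fun i => if i == k then v else 0); split.
  move=> i; case: eqP => [-> //|_]; split => //.
  by case: (dilate_o_submodule i).
rewrite big_ord_recr /= eqxx big1 ?add0r // => i _.
by rewrite ifN // neq_ltn ltn_ord.
Qed.

(* [a (graded_sum U) /\ M] contains the open set [pi^k (U k) /\ M] once
   [|pi^k / a| <= 1]. *)
Lemma graded_sum_lattice U :
  (forall i, MK_lattice (U i)) -> MK_lattice (graded_sum U).
Proof.
move=> U_lattice.
have U_osub i : o_submodule abs (U i) by case: (U_lattice i).
have W_osub := graded_sum_o_submodule U_osub.
split => // a a_neq0 _.
have [k hk] := exists_abs_piX_div_le1 a_neq0.
have [_ U_open] := U_lattice k.
apply: (open_o_submodule habs hM htop htm
  (O := (fun x => pi ^+ k *: x) @` U k `&` M)).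
- exact/o_submoduleI/hM/o_submodule_scale.
- by move=> x [].
- exact/U_open/abs_piX_le1/expf_neq0.
- by split; [exists 0; rewrite ?scaler0; case: (U_osub k) | case: hM].
move=> _ [[v Ukv <-] Mv]; split => //.
have Wv : graded_sum U v.
  by apply: (graded_sum_single (k := k)) => // i; case: (U_osub i).
exists ((pi ^+ k / a) *: v); first by case: W_osub => _ _; apply.
by rewrite scalerA mulrCA mulfV // mulr1.
Qed.

Lemma graded_sum_split (U : nat -> set V) m x :
  (forall i, o_submodule abs (U i)) ->
  (forall i j, (i <= j)%N -> U j `<=` U i) ->
  graded_sum U x -> exists h t, [/\ dilate m h, U m t & x = h + t].
Proof.
move=> U_osub U_antimono [N [w [w_piece ->]]].
exists (\sum_(i < N | (i <= m)%N) w i), (\sum_(i < N | (m < i)%N) w i); split.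
- apply: o_submodule_sum (dilate_o_submodule m) _ => i i_le_m.
  exact: dilate_mono i_le_m _ (w_piece i).2.
- apply: o_submodule_sum (U_osub m) _ => i m_lt_i.
  exact: U_antimono (ltnW m_lt_i) _ (w_piece i).1.
- rewrite (bigID (fun i : 'I_N => (i <= m)%N)) /=; congr (_ + _).
  by apply: eq_bigl => i; rewrite ltnNge.
Qed.

Lemma cauchy_dilate_bounded F :
  proper_filter_on F -> MK_cauchy abs M tau F ->
  exists n, forall A U, F A -> MK_lattice U ->
    exists a u, [/\ A a, U u & dilate n (a + u)].
Proof.
move=> hF F_cauchy; have [_ _ _ FI] := hF; apply: contrapT => unbounded.
have witness n : exists AU : set V * set V, [/\ F AU.1, MK_lattice AU.2 &
    forall a u, AU.1 a -> AU.2 u -> ~ dilate n (a + u)].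
  apply: contrapT => no_witness; apply: unbounded; exists n => A U FA LU.
  apply: contrapT => A_U_far; apply: no_witness; exists (A, U); split => //=.
  by move=> a u Aa Uu Dau; apply: A_U_far; exists a, u.
have [AU AU_far] := choice witness.
pose Us n := [set x | forall i, (i <= n)%N -> (AU i).2 x].
have Us_lattice n : MK_lattice (Us n).
  by apply: MK_lattice_prefix => //= i; case: (AU_far i).
have Us_osub n : o_submodule abs (Us n) by case: (Us_lattice n).
have Us_antimono i j : (i <= j)%N -> Us j `<=` Us i.
  by move=> i_le_j x Ujx k k_le_i; apply/Ujx/(leq_trans k_le_i).
have [W0 _ _] := graded_sum_o_submodule Us_osub.
have W_open := MK_lattice_open (graded_sum_lattice Us_lattice).
have [A [FA A_small]] := F_cauchy _ W_open W0.
have [x Ax] := proper_filter_nonempty hF FA.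
have [m Dmx] := dilate_exhaust x.
have [FAm LUm Am_far] := AU_far m.
have [y [Ay Amy]] := proper_filter_nonempty hF (FI _ _ FA FAm).
have [h [t [Dmh Umt yx_ht]]] := graded_sum_split m Us_osub Us_antimono (A_small y x Ay Ax).
apply: (Am_far y (- t) Amy).
  have [oUm _] := LUm; exact: (o_submoduleN habs oUm (Umt m (leqnn m))).
have -> : y - t = x + h by rewrite -[y](subrK x) yx_ht addrAC addrK addrC.
by have [_ DD _] := dilate_o_submodule m; apply: DD.
Qed.

Definition scaled_sum (n : nat) (A U : set V) : set V :=
  [set z | M z /\ exists a u, [/\ A a, U u & z = pi ^+ n *: (a + u)]].

Lemma open_setD_scaled_sum n A U :
  MK_lattice U -> tau (M `\` scaled_sum n A U).
Proof.
have [tau_sub _ _ _] := htop; have [addC _] := htm.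
move=> [oU U_open]; apply: (open_of_nbhs htop) => z [Mz z_far].
have piU_open := U_open _ (expf_neq0 n pi_neq0) (abs_piX_le1 n).
have piU0 : ((fun x => pi ^+ n *: x) @` U `&` M) (z + - z).
  by rewrite subrr; split; [exists 0; rewrite ?scaler0; case: oU | case: hM].
have [O [O' [tO _ Oz O'z OO'_piU]]] :=
  addC z (- z) Mz (o_submoduleN habs hM Mz) _ piU_open piU0.
exists O; split => // y Oy; split; first exact: tau_sub Oy.
move=> [My [a [u [Aa Uu y_au]]]]; apply: z_far; split => //.
have [[u' Uu' yz_u'] _] := OO'_piU y (- z) Oy O'z.
exists a, (u - u'); split => //; first exact: (o_submoduleB habs oU Uu Uu').
by rewrite addrA scalerBr yz_u' -y_au subKr.
Qed.

Lemma cauchy_has_cluster F : proper_filter_on F -> MK_cauchy abs M tau F ->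
  exists v, forall A U, F A -> MK_lattice U ->
    exists a u, [/\ A a, U u & v = a + u].
Proof.
move=> hF F_cauchy; have [n bounded] := cauchy_dilate_bounded hF F_cauchy.
have [FT _ _ FI] := hF.
pose C := [set Z | exists A U, [/\ F A, MK_lattice U & Z = scaled_sum n A U]].
have [w [Mw w_meet]] : exists w, M w /\ forall Z, C Z -> Z w.
  apply: (compact_directed_meet hcomp).
  - by move=> _ [A [U [_ LU ->]]]; exact: open_setD_scaled_sum.
  - move=> _ _ [A [U [FA LU ->]]] [A' [U' [FA' LU' ->]]].
    exists (scaled_sum n (A `&` A') (U `&` U')).
      by exists (A `&` A'), (U `&` U'); split => //; [apply: FI | apply: MK_latticeI].
    by move=> z [Mz [a [u [[Aa A'a] [Uu U'u] z_au]]]]; split; split => //; exists a, u.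
  - move=> _ [A [U [FA LU ->]]]; have [a [u [Aa Uu Dau]]] := bounded A U FA LU.
    by exists (pi ^+ n *: (a + u)); split => //; split => //; exists a, u.
  - by exists (scaled_sum n setT setT), setT, setT; split => //; apply: MK_latticeT.
exists ((pi ^+ n)^-1 *: w) => A U FA LU.
have [_ [a [u [Aa Uu ->]]]] : scaled_sum n A U w by apply: w_meet; exists A, U.
by exists a, u; split => //; rewrite scalerA mulVf ?expf_neq0 // scale1r.
Qed.

End Boundedness.

Theorem lemma1p4 (R : realType) (K : fieldType) (abs : K -> R) (p : nat)
  (V : lmodType K) (M : set V) (tau : set (set V)) :
  prime p ->
  padic_field abs p ->
  o_submodule abs M ->
  generates_over_K abs M ->
  topology_on M tau ->
  hausdorff_on M tau ->
  compact_on M tau ->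
  topological_o_module abs M tau ->
  linear_topological abs M tau ->
  MK_complete abs M tau.
Proof.
move=> p_prime [habs p_neq0 abs_p_lt1 _ _] hM hgen htop _ hcomp htm _ F hF F_cauchy.
have pi_neq0 : p%:R != 0 :> K by rewrite -(prednK (prime_gt0 p_prime)) p_neq0.
have [v v_cluster] :=
  cauchy_has_cluster habs hM htop htm hgen hcomp pi_neq0 abs_p_lt1 hF F_cauchy.
exact: (cauchy_cluster_converges habs hF F_cauchy v_cluster).
Qed.
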